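(* For a Hirzebruch-Jung continued fraction $v=[n_1,\dots,n_l]$ (all $n_j\ge 2$ integers), the integer $q_1+q_l-q$ (computed for $v$ with its own length $l$) is unchanged when $v$ is replaced by $\tau(v)$ or by $r(v)$.
   Context: For numbers $n_1,\dots,n_l$ let $M(-n_1,\dots,-n_l)$ be the $l\times l$ tridiagonal symmetric matrix with diagonal entries $-n_1,\dots,-n_l$, entries $1$ directly above and below the diagonal, and $0$ elsewhere. Put $q=|\det M(-n_1,\dots,-n_l)|$, $q_1=|\det M(-n_2,\dots,-n_l)|$, $q_l=|\det M(-n_1,\dots,-n_{l-1})|$, with the convention that the determinant of the empty matrix is $1$. The continued fraction is $[n_1,\dots,n_l]=n_1-1/(n_2-1/(\cdots-1/n_l))$. The $\tau$-operation is $\tau([n_1,\dots,n_l])=[2,n_1,\dots,n_{l-1},n_l+1]$ (length $l+1$), and the reverse operation is $r([n_1,\dots,n_l])=[n_l,\dots,n_1]$. *)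

From mathcomp Require Import all_boot all_order all_algebra.
Set Implicit Arguments. Unset Strict Implicit. Unset Printing Implicit Defensive.
Import GRing.Theory Num.Theory.
Local Open Scope ring_scope.

Definition HJmx (s : seq nat) : 'M[int]_(size s) :=
  \matrix_(i, j) (if i == j then - (nth 0%N s i)%:Z
                  else if (i.+1 == j :> nat) || (j.+1 == i :> nat) then 1 else 0).

(* |det M(-n_1,...,-n_l)|; the empty matrix has determinant 1 (\det of 'M_0). *)
Definition HJdet (s : seq nat) : int := `|\det (HJmx s)|.

Definition HJq (v : seq nat) : int := HJdet v.
Definition HJq1 (v : seq nat) : int := HJdet (behead v).
Definition HJql (v : seq nat) : int := HJdet (take (size v).-1 v).

Definition HJinv (v : seq nat) : int := HJq1 v + HJql v - HJq v.

Definition HJtau (v : seq nat) : seq nat :=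
  2%N :: (take (size v).-1 v ++ [:: (last 0%N v).+1]).

Definition HJr (v : seq nat) : seq nat := rev v.

From mathcomp Require Import all_boot all_order all_algebra.
From mathcomp Require Import ring zify.
Set Implicit Arguments. Unset Strict Implicit. Unset Printing Implicit Defensive.
Import Order.TTheory GRing.Theory Num.Theory.
Local Open Scope ring_scope.

(* Expanding along the first row shows that |det M(-n_1,...,-n_l)| is the
   continuant K(n_1,...,n_l), given by K(n_1,...,n_l) = n_1 K(n_2,...,n_l) -
   K(n_3,...,n_l).  The continuant is invariant under reversal, which gives the
   invariance under r.  It is also affine in its last entry, and when all
   n_j >= 2 it is positive, so the absolute values disappear; raising the last
   entry by one and prepending a 2 then changes q_1, q_l and q by amounts that
   cancel out. *)

Lemma seq_ind2 (T : Type) (P : seq T -> Prop) :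
  P [::] -> (forall a, P [:: a]) ->
  (forall a b s, P s -> P (b :: s) -> P [:: a, b & s]) ->
  forall s, P s.
Proof.
move=> P0 P1 PS s; suff [] : P s /\ forall a, P (a :: s) by [].
by elim: s => [|b s [Ps Pbs]]; split=> // a; apply: PS.
Qed.

Lemma behead_rev (T : Type) (s : seq T) :
  behead (rev s) = rev (take (size s).-1 s).
Proof. by rewrite -drop1 drop_rev subn1. Qed.

Lemma take_rev_behead (T : Type) (s : seq T) :
  take (size s).-1 (rev s) = rev (behead s).
Proof. by rewrite take_rev -drop1; case: s => //= a s; rewrite subSnn. Qed.

Fixpoint continuant (s : seq nat) : int :=
  match s with
  | [::] => 1
  | [:: a] => a%:Z
  | a :: ((b :: t) as s') => a%:Z * continuant s' - continuant t
  end.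

Lemma continuant_cons2 a b t :
  continuant [:: a, b & t] = a%:Z * continuant (b :: t) - continuant t.
Proof. by []. Qed.

Lemma continuant_cons a s : s != [::] ->
  continuant (a :: s) = a%:Z * continuant s - continuant (behead s).
Proof. by case: s. Qed.

Lemma continuant_consD a y s :
  continuant ((a + y)%N :: s) = continuant (a :: s) + y%:Z * continuant s.
Proof. by case: s => [|b t] /=; rewrite PoszD; ring. Qed.

Lemma continuant_rcons2 s x y :
  continuant (rcons (rcons s x) y) = y%:Z * continuant (rcons s x) - continuant s.
Proof.
elim/seq_ind2: s => [|a|a b s IHs IHbs]; try by rewrite /=; ring.
rewrite !rcons_cons !continuant_cons2 -!rcons_cons IHbs IHs; ring.
Qed.

Lemma continuant_rev s : continuant (rev s) = continuant s.
Proof.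
elim/seq_ind2: s => // a b s IHs IHbs.
by rewrite !rev_cons continuant_rcons2 -rev_cons IHbs IHs.
Qed.

Lemma continuant_rconsD s x y :
  continuant (rcons s (x + y)%N) = continuant (rcons s x) + y%:Z * continuant s.
Proof.
by rewrite -continuant_rev rev_rcons continuant_consD -rev_rcons !continuant_rev.
Qed.

Lemma continuant_behead_gt0_le s : all (leq 2) s ->
  0 < continuant (behead s) <= continuant s.
Proof.
elim/seq_ind2: s => [//|a /=|a b s _ IHbs]; first by rewrite andbT => /ltnW.
case/andP=> a_ge2 /IHbs /andP[Ks_gt0 Ks_le].
rewrite [behead _]/= in Ks_gt0 Ks_le *; rewrite continuant_cons2.
set K := continuant (b :: s) in Ks_le *.
have aK_ge : 2%:Z * K <= a%:Z * K by rewrite ler_pM2r ?(lt_le_trans Ks_gt0).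
set aK := a%:Z * K in aK_ge *; lia.
Qed.

Lemma det_HJmx_cons2 a b s :
  \det (HJmx [:: a, b & s]) = - a%:Z * \det (HJmx (b :: s)) - \det (HJmx s).
Proof.
rewrite (expand_det_row _ ord0) 2!big_ord_recl big1 ?addr0; last first.
  by move=> j _; rewrite mxE mul0r.
rewrite !mxE /= mul1r; congr (_ * _ + _).
  rewrite /cofactor expr0 mul1r; congr (\det _).
  by apply/matrixP => i j; rewrite !mxE.
rewrite /cofactor expr1 mulN1r; congr (- _).
rewrite (expand_det_col _ ord0) big_ord_recl big1 ?addr0; last first.
  by move=> i _; rewrite !mxE mul0r.
rewrite !mxE /= mul1r /cofactor expr0 mul1r; congr (\det _).
by apply/matrixP => i j; rewrite !mxE /= -val_eqE /= /bump /= !add1n !eqSS.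
Qed.

Lemma det_HJmx s : \det (HJmx s) = (-1) ^+ size s * continuant s.
Proof.
elim/seq_ind2: s => [|a|a b s IHs IHbs]; first by rewrite det_mx00 mul1r.
  by rewrite [HJmx _]mx11_scalar det_scalar1 mxE /= mulN1r.
rewrite det_HJmx_cons2 IHbs IHs /= !exprS; ring.
Qed.

Lemma HJdetE s : HJdet s = `|continuant s|.
Proof. by rewrite /HJdet det_HJmx normrM normrX normrN1 expr1n mul1r. Qed.

Lemma HJdet_continuant s : all (leq 2) s -> HJdet s = continuant s.
Proof.
move=> /continuant_behead_gt0_le /andP[Ks_gt0 Ks_le].
by rewrite HJdetE gtr0_norm // (lt_le_trans Ks_gt0 Ks_le).
Qed.

Lemma HJdet_rev s : HJdet (rev s) = HJdet s.
Proof. by rewrite !HJdetE continuant_rev. Qed.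

Lemma HJinv_rev v : HJinv (HJr v) = HJinv v.
Proof.
rewrite /HJinv /HJq1 /HJql /HJq /HJr size_rev behead_rev take_rev_behead.
by rewrite !HJdet_rev (addrC (HJdet (behead v))).
Qed.

Lemma HJinv_rcons s x :
  HJinv (rcons s x) = HJdet (behead (rcons s x)) + HJdet s - HJdet (rcons s x).
Proof. by rewrite /HJinv /HJq1 /HJql /HJq size_rcons -cats1 take_size_cat. Qed.

Lemma HJtau_rcons s x : HJtau (rcons s x) = 2%N :: rcons s x.+1.
Proof. by rewrite /HJtau size_rcons -cats1 take_size_cat // last_cat cats1. Qed.

Lemma HJinv_tau v : (0 < size v)%N -> all (leq 2) v -> HJinv (HJtau v) = HJinv v.
Proof.
case/lastP: v => [//|w x] _ v_ge2.
have /andP[x_ge2 w_ge2] : (2 <= x)%N && all (leq 2) w by rewrite -all_rcons.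
have bv_ge2 : all (leq 2) (behead (rcons w x)).
  by apply/allP => n /mem_behead; apply: (allP v_ge2).
have wx1_ge2 : all (leq 2) (rcons w x.+1) by rewrite all_rcons w_ge2 ltnW.
have w2_ge2 : all (leq 2) (2%N :: w) by rewrite /= w_ge2.
have w2x1_ge2 : all (leq 2) (rcons (2%N :: w) x.+1) by rewrite /= wx1_ge2.
rewrite HJtau_rcons -rcons_cons !HJinv_rcons [behead _]/= !HJdet_continuant //.
rewrite -[x.+1]addn1 !continuant_rconsD rcons_cons (@continuant_cons 2 (rcons w x)).
  ring.
by rewrite -size_eq0 size_rcons.
Qed.

Theorem lemma2p6 (v : seq nat) :
  (0 < size v)%N -> all (fun n => 2 <= n)%N v ->
  HJinv (HJtau v) = HJinv v /\ HJinv (HJr v) = HJinv v.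
Proof. by move=> v_gt0 v_ge2; split; [exact: HJinv_tau | exact: HJinv_rev]. Qed.
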